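(* Let $d,a,b$ be positive integers, $r=(d+2b)/d$, $R=(a+d)/d$, and assume $r\ge2$ and $R\ge3r$. Let $\rho=x_1-r$ with $x_1$ as in the context. Then \[ \rho<\frac{5r}{2e^{R/r}}. \]
   Context: For $t\in\mathbb C\setminus\{\pm1,\pm r\}$ let $\Phi(t)=d\log|t+r|-d\log|t-r|+(a+d)(\log|t-1|-\log|t+1|)$. Under $R\ge3r$ there is a unique $x_1\in(r,\infty)$ with $\Phi(x_1)=0$. *)

From Stdlib Require Import Reals Lra.
Open Scope R_scope.

Definition r_of (d b : nat) : R := (INR d + 2 * INR b) / INR d.
Definition R_of (d a : nat) : R := (INR a + INR d) / INR d.

(* Phi restricted to the real line (x_1 is real):
   Phi(t) = d log|t+r| - d log|t-r| + (a+d)(log|t-1| - log|t+1|). *)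
Definition Phi (d a b : nat) (t : R) : R :=
  let r := r_of d b in
  INR d * ln (Rabs (t + r)) - INR d * ln (Rabs (t - r))
  + (INR a + INR d) * (ln (Rabs (t - 1)) - ln (Rabs (t + 1))).

From Stdlib Require Import Reals Psatz.
Open Scope R_scope.

(* At the root, [ln ((x+r)/(x-r)) = R ln ((x+1)/(x-1))].  The tangent-line
   bound [ln y <= y - 1] gives [ln ((x+r)/(x-r)) <= 2r/rho] with [rho = x - r],
   while the secant bounds give [ln ((x+1)/(x-1)) >= 5/(3x)].  With [R >= 3r]
   this first forces [x <= 5r/3], and then [ln ((x+r)/(x-r)) >= R/r], i.e.
   [exp (R/r) <= 1 + 2r/rho].  Since [R/r >= 3] and [exp 3 > 5], this yields
   [rho <= 2r/(exp (R/r) - 1) < 5r/(2 exp (R/r))]. *)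

Lemma ln_le_sub_1 (y : R) : 0 < y -> ln y <= y - 1.
Proof.
  intros Hy. pose proof (exp_ineq1_le (ln y)) as H.
  rewrite exp_ln in H; lra.
Qed.

Lemma ln_sub (p q : R) : 0 < p -> 0 < q -> ln p - ln q = ln (p / q).
Proof.
  intros Hp Hq. unfold Rdiv.
  rewrite ln_mult, ln_Rinv; [lra | lra | lra | apply Rinv_0_lt_compat; lra].
Qed.

Lemma ln_sub_le (p q : R) : 0 < p -> 0 < q -> ln p - ln q <= (p - q) / q.
Proof.
  intros Hp Hq. rewrite ln_sub by lra.
  replace ((p - q) / q) with (p / q - 1) by (field; lra).
  apply ln_le_sub_1, Rdiv_lt_0_compat; lra.
Qed.

Lemma ln_sub_ge (p q : R) : 0 < p -> 0 < q -> (p - q) / p <= ln p - ln q.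
Proof.
  intros Hp Hq. pose proof (ln_sub_le q p Hq Hp).
  replace ((p - q) / p) with (- ((q - p) / p)) by (field; lra). lra.
Qed.

Lemma ln_sub_ge_secant (x : R) : 2 <= x -> 5 / (3 * x) <= ln (x + 1) - ln (x - 1).
Proof.
  intros Hx.
  assert (Hup : 1 / (x + 1) <= ln (x + 1) - ln x).
  { replace (1 / (x + 1)) with ((x + 1 - x) / (x + 1)) by (field; lra).
    apply ln_sub_ge; lra. }
  assert (Hdown : 1 / x <= ln x - ln (x - 1)).
  { replace (1 / x) with ((x - (x - 1)) / x) by (field; lra).
    apply ln_sub_ge; lra. }
  assert (Hx1 : 2 / (3 * x) <= 1 / (x + 1)).
  { apply Rmult_le_reg_r with (3 * x * (x + 1)); [nra |].
    field_simplify; lra. }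
  replace (5 / (3 * x)) with (2 / (3 * x) + 1 / x) by (field; lra). lra.
Qed.

Lemma exp_le_compat (u v : R) : u <= v -> exp u <= exp v.
Proof.
  intros [Huv | ->]; [left; apply exp_increasing | right]; easy.
Qed.

Lemma exp_3_gt_5 : 5 < exp 3.
Proof.
  replace 3 with (3 / 2 + 3 / 2) by lra. rewrite exp_plus.
  pose proof (exp_ineq1_le (3 / 2)). nra.
Qed.

Section Root.

Variables r R x : R.
Hypothesis r_ge_2 : 2 <= r.
Hypothesis R_ge_3r : 3 * r <= R.
Hypothesis r_lt_x : r < x.
Hypothesis root_eq :
  ln (x + r) - ln (x - r) = R * (ln (x + 1) - ln (x - 1)).

Let rho := x - r.

Lemma root_secant_bound : R * (5 / (3 * x)) <= ln (x + r) - ln (x - r).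
Proof.
  rewrite root_eq. apply Rmult_le_compat_l; [lra |].
  apply ln_sub_ge_secant; lra.
Qed.

Lemma root_tangent_bound : ln (x + r) - ln (x - r) <= 2 * r / rho.
Proof.
  replace (2 * r / rho) with ((x + r - (x - r)) / (x - r)) by (unfold rho; field; lra).
  apply ln_sub_le; lra.
Qed.

Lemma root_le_5r_3 : 3 * x <= 5 * r.
Proof.
  pose proof root_secant_bound as Hsec. pose proof root_tangent_bound as Htan.
  assert (Hrho : 0 < rho) by (unfold rho; lra).
  assert (H : r * (5 / x) <= 2 * r / rho).
  { replace (r * (5 / x)) with (3 * r * (5 / (3 * x))) by (field; lra).
    apply Rle_trans with (R * (5 / (3 * x))); [| lra].
    apply Rmult_le_compat_r; [apply Rlt_le, Rdiv_lt_0_compat |]; lra. }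
  apply Rmult_le_compat_r with (r := rho * x / r) in H;
    [| apply Rlt_le, Rdiv_lt_0_compat; nra].
  replace (r * (5 / x) * (rho * x / r)) with (5 * rho) in H by (field; lra).
  replace (2 * r / rho * (rho * x / r)) with (2 * x) in H by (field; lra).
  unfold rho in H. lra.
Qed.

Lemma root_exp_bound : exp (R / r) <= 1 + 2 * r / rho.
Proof.
  assert (Hratio : 0 < (x + r) / (x - r)) by (apply Rdiv_lt_0_compat; lra).
  replace (1 + 2 * r / rho) with ((x + r) / (x - r)) by (unfold rho; field; lra).
  rewrite <- (exp_ln _ Hratio). apply exp_le_compat.
  rewrite <- ln_sub by lra.
  apply Rle_trans with (R * (5 / (3 * x))); [| apply root_secant_bound].
  pose proof root_le_5r_3.
  apply Rmult_le_reg_r with (3 * x * r); [nra |].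
  field_simplify; nra.
Qed.

Lemma root_bound : rho < 5 * r / (2 * exp (R / r)).
Proof.
  assert (Hrho : 0 < rho) by (unfold rho; lra).
  assert (He : 5 < exp (R / r)).
  { apply Rlt_le_trans with (exp 3); [apply exp_3_gt_5 | apply exp_le_compat].
    apply Rmult_le_reg_r with r; [lra |]. field_simplify; lra. }
  pose proof root_exp_bound as Hb.
  apply Rmult_le_compat_l with (r := rho) in Hb; [| lra].
  replace (rho * (1 + 2 * r / rho)) with (rho + 2 * r) in Hb by (field; lra).
  apply Rmult_lt_reg_r with (2 * exp (R / r)); [lra |].
  replace (5 * r / (2 * exp (R / r)) * (2 * exp (R / r))) with (5 * r) by (field; lra).
  nra.
Qed.

End Root.

Lemma Phi_root_eq (d a b : nat) (x : R) :
  (0 < d)%nat -> 1 < r_of d b -> r_of d b < x -> Phi d a b x = 0 ->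
  ln (x + r_of d b) - ln (x - r_of d b) = R_of d a * (ln (x + 1) - ln (x - 1)).
Proof.
  intros Hd Hr Hx HPhi. unfold Phi in HPhi.
  assert (Dpos : 0 < INR d) by (apply lt_0_INR; lia).
  replace (INR a + INR d) with (R_of d a * INR d) in HPhi by (unfold R_of; field; lra).
  rewrite !Rabs_pos_eq in HPhi by lra.
  apply Rmult_eq_reg_l with (INR d); lra.
Qed.

Theorem lemma4p14 (d a b : nat) (x1 : R) :
  (0 < d)%nat -> (0 < a)%nat -> (0 < b)%nat ->
  2 <= r_of d b ->
  3 * r_of d b <= R_of d a ->
  r_of d b < x1 ->
  Phi d a b x1 = 0 ->
  x1 - r_of d b < 5 * r_of d b / (2 * exp (R_of d a / r_of d b)).
Proof.
  intros Hd _ _ Hr HR Hx HPhi.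
  apply root_bound; [assumption .. |].
  apply (Phi_root_eq d a b); [assumption | lra | assumption | assumption].
Qed.
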